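(* Let $k\ge1$ and let $\varphi_k,\psi_k,G_{k-1},H_{k-1}$ be as defined below. If $g\in G_{k-1}$ is a product of two squares in $\mathbb{F}_2$ (i.e. $g=a^2b^2$ with $a,b\in\mathbb{F}_2$), then $\varphi_k(g)$ is even. Likewise, if $g\in H_{k-1}$ is a product of two squares in $\mathbb{F}_2$, then $\psi_k(g)$ is even.
   Context: $\mathbb{F}_2$ is the free group on $x,y$. Let $\tilde K$ be the graph with vertex set $\mathbb{Z}^2$ and oriented edges $x^iy^jX$ from $(i,j)$ to $(i+1,j)$ and $x^iy^jY$ from $(i,j)$ to $(i,j+1)$. A $1$-chain is written $\alpha=P_\alpha(x,y)X+Q_\alpha(x,y)Y$ with $P_\alpha,Q_\alpha$ integer Laurent polynomials (coefficient of $x^iy^j$ in $P_\alpha$ = coefficient of edge $x^iy^jX$, similarly for $Q_\alpha$). For $g\in[\mathbb{F}_2,\mathbb{F}_2]$ written as a word in $x^{\pm1},y^{\pm1}$, the cycle $\alpha_g$ is the $1$-cycle traced by the lattice path from $(0,0)$ in which $x,x^{-1},y,y^{-1}$ move by $(1,0),(-1,0),(0,1),(0,-1)$ along the corresponding edges, each edge counted with sign $+1$ if traversed in its orientation and $-1$ otherwise; its homology class depends only on $g$. Put $f_g(y)=P_{\alpha_g}(1,y)$ and $g_g(x)=Q_{\alpha_g}(x,1)$. Set $G_0=H_0=[\mathbb{F}_2,\mathbb{F}_2]$ and inductively, for $k\ge1$, $\varphi_k(g)=f_g^{(k)}(1)/k!$ for $g\in G_{k-1}$, $\psi_k(g)=g_g^{(k)}(1)/k!$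 for $g\in H_{k-1}$ (integers), $G_k=\ker\varphi_k$, $H_k=\ker\psi_k$. These $\varphi_k,\psi_k$ are group homomorphisms to $\mathbb{Z}$. *)

From mathcomp Require Import all_boot all_order all_algebra.
Set Implicit Arguments. Unset Strict Implicit. Unset Printing Implicit Defensive.
Import Order.TTheory GRing.Theory Num.Theory.
Local Open Scope ring_scope.

(* Letters of words in F_2 = <x,y>: (is_x, is_positive).
   (true,true)=x, (true,false)=x^-1, (false,true)=y, (false,false)=y^-1. *)
Definition letter := (bool * bool)%type.
Definition word := seq letter.

Definition inv_letter (l : letter) : letter := (l.1, ~~ l.2).
Definition inv_word (w : word) : word := rev (map inv_letter w).

Definition reduce (w : word) : word :=
  foldr (fun l acc => match acc with
                      | l' :: t => if l' == inv_letter l then t else l :: acc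
                      | [::] => [:: l]
                      end) [::] w.

Definition free_eq (u v : word) : Prop := reduce u = reduce v.

Definition commw (u v : word) : word := inv_word u ++ inv_word v ++ u ++ v.

(* Membership in the commutator subgroup [F_2,F_2]: the subgroup generated by
   commutators, i.e. products of commutators (inverse of a commutator is one). *)
Definition in_comm (w : word) : Prop :=
  exists s : seq (word * word),
    free_eq w (flatten [seq commw p.1 p.2 | p <- s]).

(* Signed oriented edges of the lattice graph K~:
   edir = true : edge x^i y^j X from (i,j) to (i+1,j)
   edir = false: edge x^i y^j Y from (i,j) to (i,j+1). *)
Record sedge := SEdge { edir : bool; ei : int; ej : int; esgn : int }.

(* The 1-chain traced by the lattice path of a word starting at (i,j),
   as a formal sum (list) of signed edges. *)
Fixpoint walk (i j : int) (w : word) : seq sedge :=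
  match w with
  | [::] => [::]
  | l :: t =>
    if l.1 then
      if l.2 then SEdge true i j 1 :: walk (i + 1) j t
      else SEdge true (i - 1) j (-1) :: walk (i - 1) j t
    else
      if l.2 then SEdge false i j 1 :: walk i (j + 1) t
      else SEdge false i (j - 1) (-1) :: walk i (j - 1) t
  end.

Definition alpha (w : word) : seq sedge := walk 0 0 w.

(* One-variable Laurent polynomials as formal sums of (exponent, coefficient). *)
Definition laurent := seq (int * int).

(* f_g(y) = P_alpha(1,y) : each X-edge x^i y^j X with sign s contributes s*y^j. *)
Definition fpoly (w : word) : laurent :=
  [seq (ej e, esgn e) | e <- alpha w & edir e].
(* g_g(x) = Q_alpha(x,1) : each Y-edge x^i y^j Y with sign s contributes s*x^i. *)
Definition gpoly (w : word) : laurent :=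
  [seq (ei e, esgn e) | e <- alpha w & ~~ edir e].

(* Falling factorial z(z-1)...(z-k+1) = k-th derivative of t^z at t = 1. *)
Fixpoint ffact (z : int) (k : nat) : int :=
  match k with
  | 0%N => 1
  | k'.+1 => ffact z k' * (z - k'%:Z)
  end.

Definition deriv_at1_div_fact (k : nat) (f : laurent) : rat :=
  \sum_(t <- f) ((t.2 * ffact t.1 k)%:~R / (k`!)%:R).

Definition phi (k : nat) (w : word) : rat := deriv_at1_div_fact k (fpoly w).
Definition psi (k : nat) (w : word) : rat := deriv_at1_div_fact k (gpoly w).

(* G_k and H_k (G_0 = H_0 = [F_2,F_2], G_k = ker phi_k on G_{k-1}). *)
Definition inG (k : nat) (w : word) : Prop :=
  in_comm w /\ forall m : nat, (0 < m <= k)%N -> phi m w = 0.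
Definition inH (k : nat) (w : word) : Prop :=
  in_comm w /\ forall m : nat, (0 < m <= k)%N -> psi m w = 0.

Definition prod_two_squares (w : word) : Prop :=
  exists a b : word, free_eq w (a ++ a ++ b ++ b).

Definition is_even_rat (q : rat) : Prop := exists m : int, q = (2 * m)%:~R.

From mathcomp Require Import all_boot all_order all_algebra.
From mathcomp Require Import ring zify.
Set Implicit Arguments. Unset Strict Implicit. Unset Printing Implicit Defensive.
Import Order.TTheory GRing.Theory Num.Theory.
Local Open Scope ring_scope.

(* Write g = a^2 b^2.  As g lies in [F_2, F_2] its y-exponent sum vanishes, so the
   y-exponent sums of a and b are q and -q, and the lattice path of a a b b gives
   f_g(y) = h(y) (1 + y^q) with h = f_a + y^q f_b (f_g only depends on the reduced
   word).  Multiplication by y^q preserves the order of vanishing of a Laurent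
   polynomial at y = 1 and its leading Taylor coefficient there.  Hence if
   f_g(1) = phi_1(g) = ... = phi_(k-1)(g) = 0, the same holds for h, and
   phi_k(g) = 2 h^(k)(1)/k!, which is twice an integer.  The statement for psi
   follows by the automorphism of F_2 exchanging x and y. *)

Definition binz (e : int) (m : nat) : rat := (ffact e m)%:~R / (m`!)%:R.

Lemma ffactSS (z : int) (m : nat) : ffact (z + 1) m.+1 = (z + 1) * ffact z m.
Proof.
elim: m => [|m IHm] /=; first by rewrite mulr1 subr0 mul1r.
rewrite /= in IHm; rewrite IHm -mulrA; congr (_ * _).
by rewrite -[m.+1]addn1 PoszD; ring.
Qed.

Lemma binz0 (e : int) : binz e 0 = 1.
Proof. by rewrite /binz /= divr1. Qed.

Lemma binz0S (m : nat) : binz 0 m.+1 = 0.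
Proof.
rewrite /binz; suff -> : ffact 0 m.+1 = 0 by rewrite mul0r.
by elim: m => [|m IHm] //=; rewrite /= in IHm; rewrite IHm mul0r.
Qed.

Lemma binzS (e : int) (m : nat) : binz (e + 1) m.+1 = binz e m.+1 + binz e m.
Proof.
rewrite /binz ffactSS /= factS natrM !intrM intrD intrB.
have fact_neq0 : (m`!)%:R != 0 :> rat by rewrite pnatr_eq0 -lt0n fact_gt0.
rewrite -[m.+1]addn1 natrD; field.
by rewrite fact_neq0 natr1 pnatr_eq0.
Qed.

Lemma binz_int (e : int) (m : nat) : binz e m \is a Num.int.
Proof.
elim: m e => [|m IHm] e; first by rewrite binz0.
elim/int_rect: e => [|n IHn|n IHn]; first by rewrite binz0S.
- by rewrite -addn1 PoszD binzS rpredD.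
- have shift : - n.+1%:Z + 1 = - n%:Z by rewrite -addn1 PoszD opprD addrNK.
  by rewrite -(addrK (binz (- n.+1%:Z) m) (binz _ m.+1)) -binzS shift rpredB.
Qed.

(* Since t^e = \sum_m binz e m (t - 1)^m, taylor1 m L is the coefficient of
   (t - 1)^m in the Laurent polynomial L. *)
Definition taylor1 (m : nat) (L : laurent) : rat := \sum_(t <- L) t.2%:~R * binz t.1 m.

Definition lshift (q : int) (L : laurent) : laurent := [seq (t.1 + q, t.2) | t <- L].

Definition vanishes_below (k : nat) (L : laurent) : Prop :=
  forall j, (j < k)%N -> taylor1 j L = 0.

Lemma taylor1_cons (m : nat) (t : int * int) (L : laurent) :
  taylor1 m (t :: L) = t.2%:~R * binz t.1 m + taylor1 m L.
Proof. exact: big_cons. Qed.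

Lemma taylor1_cat (m : nat) (L1 L2 : laurent) :
  taylor1 m (L1 ++ L2) = taylor1 m L1 + taylor1 m L2.
Proof. exact: big_cat. Qed.

Lemma taylor1_perm (m : nat) (L1 L2 : laurent) :
  perm_eq L1 L2 -> taylor1 m L1 = taylor1 m L2.
Proof. exact: perm_big. Qed.

Lemma taylor1_int (m : nat) (L : laurent) : taylor1 m L \is a Num.int.
Proof. by apply/rpred_sum => t _; apply/rpredM; [exact: intr_int | exact: binz_int]. Qed.

Lemma lshift0 (L : laurent) : lshift 0 L = L.
Proof. by elim: L => [|[e c] L IHL] //=; rewrite addr0 IHL. Qed.

Lemma lshift_cat (q : int) (L1 L2 : laurent) :
  lshift q (L1 ++ L2) = lshift q L1 ++ lshift q L2.
Proof. exact: map_cat. Qed.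

Lemma lshiftD (q r : int) (L : laurent) : lshift r (lshift q L) = lshift (q + r) L.
Proof. by rewrite /lshift -map_comp; apply: eq_map => t /=; rewrite addrA. Qed.

Lemma taylor10_lshift (q : int) (L : laurent) : taylor1 0 (lshift q L) = taylor1 0 L.
Proof. by rewrite /taylor1 big_map; apply: eq_bigr => t _; rewrite !binz0. Qed.

Lemma taylor1_lshift1S (m : nat) (L : laurent) :
  taylor1 m.+1 (lshift 1 L) = taylor1 m.+1 L + taylor1 m L.
Proof.
by rewrite /taylor1 big_map -big_split; apply: eq_bigr => t _; rewrite binzS mulrDr.
Qed.

Lemma vanishes_below_lshift1 (k : nat) (L : laurent) :
  vanishes_below k (lshift 1 L) <-> vanishes_below k L.
Proof.
split=> van j ltjk.
- elim: j ltjk => [|j IHj] ltjk; first by rewrite -(taylor10_lshift 1) van.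
  have := van j.+1 ltjk; rewrite taylor1_lshift1S IHj ?addr0 //.
  exact: ltn_trans ltjk.
- case: j ltjk => [|j] ltjk; first by rewrite taylor10_lshift van.
  by rewrite taylor1_lshift1S (van j.+1) ?(van j) ?addr0 // (ltn_trans _ ltjk).
Qed.

Lemma taylor1_lshift1_lead (k : nat) (L : laurent) :
  vanishes_below k L -> taylor1 k (lshift 1 L) = taylor1 k L.
Proof.
case: k => [|k] van; first exact: taylor10_lshift.
by rewrite taylor1_lshift1S (van k) ?addr0.
Qed.

Lemma lshift_lead (q : int) (k : nat) (L : laurent) : vanishes_below k L ->
  vanishes_below k (lshift q L) /\ taylor1 k (lshift q L) = taylor1 k L.
Proof.
elim/int_rect: q L => [|n IHn|n IHn] L van; first by rewrite lshift0.
- have [van_n lead_n] := IHn L van.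
  rewrite -addn1 PoszD -lshiftD vanishes_below_lshift1 taylor1_lshift1_lead //.
- have shift : - n.+1%:Z + 1 = - n%:Z by rewrite -addn1 PoszD opprD addrNK.
  have [] := IHn L van; rewrite -shift -lshiftD vanishes_below_lshift1 => van_n.
  by rewrite taylor1_lshift1_lead.
Qed.

Lemma taylor1_double (q : int) (k : nat) (L : laurent) :
  vanishes_below k L -> taylor1 k (L ++ lshift q L) = 2 * taylor1 k L.
Proof.
by move=> /(lshift_lead q) [_ lead]; rewrite taylor1_cat lead mulr2n mulrDl mul1r.
Qed.

Lemma vanishes_below_double (q : int) (k : nat) (L : laurent) :
  vanishes_below k (L ++ lshift q L) -> vanishes_below k L.
Proof.
elim: k => [|k IHk] van j ltjk //.
have vanL : vanishes_below k L by apply: IHk => i ltik; apply: van; apply: ltnW.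
move: ltjk; rewrite ltnS leq_eqVlt => /orP [/eqP -> | ltjk]; last exact: vanL.
by have /eqP := van k (ltnSn k); rewrite taylor1_double // mulf_eq0 pnatr_eq0 => /eqP.
Qed.

Lemma taylor1_double_even (q : int) (k : nat) (L : laurent) :
  vanishes_below k (L ++ lshift q L) -> is_even_rat (taylor1 k (L ++ lshift q L)).
Proof.
move=> /vanishes_below_double vanL; have /intrP [z taylor_z] := taylor1_int k L.
by exists z; rewrite taylor1_double // taylor_z intrM.
Qed.

Lemma reduce_cons (l : letter) (w : word) : reduce (l :: w) =
  if reduce w is l' :: w' then (if l' == inv_letter l then w' else l :: reduce w)
  else [:: l].
Proof. by []. Qed.

Lemma reduce_consP (l : letter) (w : word) : reduce (l :: w) = l :: reduce w \/
  exists2 w', reduce w = inv_letter l :: w' & reduce (l :: w) = w'.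
Proof.
rewrite reduce_cons; case: (reduce w) => [|l' w']; first by left.
by case: eqP => [->|_]; [right; exists w' | left].
Qed.

Section LetterWeight.

Variable f : letter -> int.
Hypothesis f_inv : forall l, f (inv_letter l) = - f l.

Definition weight (w : word) : int := \sum_(l <- w) f l.

Lemma weight_nil : weight [::] = 0.
Proof. exact: big_nil. Qed.

Lemma weight_cons (l : letter) (w : word) : weight (l :: w) = f l + weight w.
Proof. exact: big_cons. Qed.

Lemma weight_cat (u v : word) : weight (u ++ v) = weight u + weight v.
Proof. exact: big_cat. Qed.

Lemma weight_reduce (w : word) : weight (reduce w) = weight w.
Proof.
elim: w => [|l w IHw] //; rewrite weight_cons -IHw.
have [->|[w' red_w ->]] := reduce_consP l w; first by rewrite weight_cons.
by rewrite red_w weight_cons f_inv addNKr.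
Qed.

Lemma weight_free_eq (u v : word) : free_eq u v -> weight u = weight v.
Proof. by rewrite /free_eq -(weight_reduce u) -(weight_reduce v) => ->. Qed.

Lemma weight_inv_word (w : word) : weight (inv_word w) = - weight w.
Proof.
rewrite /weight /inv_word big_rev big_map -sumrN.
by apply: eq_bigr => l _; rewrite f_inv.
Qed.

Lemma weight_comm (w : word) : in_comm w -> weight w = 0.
Proof.
case=> s /weight_free_eq ->; elim: s => [|p s IHs] /=; first exact: weight_nil.
by rewrite /commw !weight_cat IHs !weight_inv_word; ring.
Qed.

End LetterWeight.

Definition lsign (l : letter) : int := if l.2 then 1 else -1.

Definition xweight (l : letter) : int := if l.1 then lsign l else 0.
Definition yweight (l : letter) : int := if l.1 then 0 else lsign l.

Lemma xweight_inv (l : letter) : xweight (inv_letter l) = - xweight l.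
Proof. by case: l => [[] []]. Qed.

Lemma yweight_inv (l : letter) : yweight (inv_letter l) = - yweight l.
Proof. by case: l => [[] []]. Qed.

Notation xdeg := (weight xweight).
Notation ydeg := (weight yweight).

Section LetterMap.

Variable f : letter -> letter.
Hypothesis f_inj : injective f.
Hypothesis f_inv : forall l, f (inv_letter l) = inv_letter (f l).

Lemma reduce_map (w : word) : reduce (map f w) = map f (reduce w).
Proof.
elim: w => [|l w IHw] //; rewrite (reduce_cons (f l)) reduce_cons IHw.
by case: (reduce w) => [|l' w'] //=; rewrite -f_inv (inj_eq f_inj); case: ifP.
Qed.

Lemma free_eq_map (u v : word) : free_eq u v -> free_eq (map f u) (map f v).
Proof. by rewrite /free_eq !reduce_map => ->. Qed.

Lemma inv_word_map (w : word) : inv_word (map f w) = map f (inv_word w).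
Proof. by rewrite /inv_word map_rev -!map_comp (eq_map f_inv). Qed.

Lemma in_comm_map (w : word) : in_comm w -> in_comm (map f w).
Proof.
case=> s /free_eq_map eq_s; exists [seq (map f p.1, map f p.2) | p <- s].
rewrite /free_eq {}eq_s; congr reduce; elim: s => [|p s IHs] //=.
by rewrite map_cat IHs /commw !map_cat !inv_word_map.
Qed.

Lemma prod_two_squares_map (w : word) : prod_two_squares w -> prod_two_squares (map f w).
Proof.
by case=> a [b /free_eq_map eq_ab]; exists (map f a), (map f b); rewrite -!map_cat.
Qed.

End LetterMap.

Definition xpart (c : seq sedge) : laurent := [seq (ej e, esgn e) | e <- c & edir e].
Definition ypart (c : seq sedge) : laurent := [seq (ei e, esgn e) | e <- c & ~~ edir e].

Lemma xpart_cons (e : sedge) (c : seq sedge) :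
  xpart (e :: c) = if edir e then (ej e, esgn e) :: xpart c else xpart c.
Proof. by rewrite /xpart /=; case: (edir e). Qed.

Lemma xpart_cat (c1 c2 : seq sedge) : xpart (c1 ++ c2) = xpart c1 ++ xpart c2.
Proof. by rewrite /xpart filter_cat map_cat. Qed.

Lemma walk_cat (i j : int) (u v : word) :
  walk i j (u ++ v) = walk i j u ++ walk (i + xdeg u) (j + ydeg u) v.
Proof.
elim: u i j => [|l u IHu] i j /=; first by rewrite !weight_nil !addr0.
rewrite !weight_cons.
by case: l => [[] []]; rewrite /= IHu /xweight /yweight /lsign /= ?add0r ?addrA.
Qed.

Lemma fpolyE (w : word) : fpoly w = xpart (walk 0 0 w).
Proof. by []. Qed.

Lemma xpart_walk_translate (w : word) (i i' j q : int) :
  xpart (walk i (j + q) w) = lshift q (xpart (walk i' j w)).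
Proof.
elim: w i i' j => [|l w IHw] i i' j //.
case: l => [[] []]; rewrite /= !xpart_cons /=.
- by rewrite (IHw _ (i' + 1)).
- by rewrite (IHw _ (i' - 1)).
- by rewrite addrAC (IHw _ i').
- by rewrite addrAC (IHw _ i').
Qed.

Lemma xpart_walk (i j : int) (w : word) : xpart (walk i j w) = lshift j (fpoly w).
Proof. by rewrite -{1}(add0r j) (xpart_walk_translate _ _ 0). Qed.

Lemma taylor1_xpart_walk_reduce (m : nat) (i j : int) (w : word) :
  taylor1 m (xpart (walk i j (reduce w))) = taylor1 m (xpart (walk i j w)).
Proof.
elim: w i j => [|l w IHw] i j //.
have [->|[w' red_w ->]] := reduce_consP l w.
  by case: l => [[] []]; rewrite /= !xpart_cons /= ?taylor1_cons IHw.
case: l red_w => [[] []] red_w;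
  rewrite /= !xpart_cons /= ?taylor1_cons -IHw red_w /= !xpart_cons /=;
  by rewrite ?taylor1_cons ?addrK ?subrK ?mul1r ?mulN1r ?addKr ?addNKr.
Qed.

Lemma taylor1_fpoly_free_eq (m : nat) (u v : word) :
  free_eq u v -> taylor1 m (fpoly u) = taylor1 m (fpoly v).
Proof.
by move=> eq_uv; rewrite -[LHS]taylor1_xpart_walk_reduce eq_uv taylor1_xpart_walk_reduce.
Qed.

Lemma taylor10_xpart_walk (i j : int) (w : word) :
  taylor1 0 (xpart (walk i j w)) = (xdeg w)%:~R.
Proof.
elim: w i j => [|l w IHw] i j; first by rewrite weight_nil /taylor1 big_nil.
rewrite weight_cons intrD.
by case: l => [[] []]; rewrite /= xpart_cons /= ?taylor1_cons IHw ?binz0 ?add0r.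
Qed.

Lemma fpoly_two_squares (a b : word) : ydeg (a ++ a ++ b ++ b) = 0 ->
  exists h q, perm_eq (fpoly (a ++ a ++ b ++ b)) (h ++ lshift q h).
Proof.
rewrite !weight_cat => ydeg0.
have ydeg_b : ydeg b = - ydeg a by lia.
exists (fpoly a ++ lshift (ydeg a) (fpoly b)), (ydeg a).
rewrite fpolyE !walk_cat !xpart_cat !xpart_walk ydeg_b !add0r addrK lshift0.
by rewrite !lshift_cat lshiftD -catA perm_cat2l catA perm_catC.
Qed.

Definition swap_xy (l : letter) : letter := (~~ l.1, l.2).

Lemma swap_xyK : involutive swap_xy.
Proof. by case=> [[] []]. Qed.

Lemma swap_xy_inv (l : letter) : swap_xy (inv_letter l) = inv_letter (swap_xy l).
Proof. by []. Qed.

Lemma ypart_walk_swap (i j : int) (w : word) :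
  ypart (walk i j w) = xpart (walk j i (map swap_xy w)).
Proof.
elim: w i j => [|l w IHw] i j //.
by case: l => [[] []]; rewrite /= xpart_cons /= -IHw.
Qed.

Lemma deriv_at1_div_factE (m : nat) (L : laurent) : deriv_at1_div_fact m L = taylor1 m L.
Proof. by apply: eq_bigr => t _; rewrite intrM mulrA. Qed.

Lemma psi_swap (m : nat) (w : word) : psi m w = phi m (map swap_xy w).
Proof. by rewrite /psi /phi /gpoly /alpha -/(ypart _) ypart_walk_swap. Qed.

Lemma phi0 (w : word) : phi 0 w = (xdeg w)%:~R.
Proof. by rewrite /phi deriv_at1_div_factE fpolyE taylor10_xpart_walk. Qed.

Lemma phi_two_squares_even (k : nat) (g : word) : in_comm g -> prod_two_squares g ->
  (forall m, (0 < m < k)%N -> phi m g = 0) -> is_even_rat (phi k g).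
Proof.
move=> comm_g [a [b eq_ab]] phi_g.
have /fpoly_two_squares [h [q perm_h]] : ydeg (a ++ a ++ b ++ b) = 0.
  by rewrite -(weight_free_eq yweight_inv eq_ab) (weight_comm yweight_inv comm_g).
have phiE m : phi m g = taylor1 m (h ++ lshift q h).
  rewrite /phi deriv_at1_div_factE (taylor1_fpoly_free_eq m eq_ab).
  exact: taylor1_perm.
rewrite phiE; apply: taylor1_double_even => -[|j] ltjk; rewrite -phiE.
  by rewrite phi0 (weight_comm xweight_inv comm_g).
exact: phi_g.
Qed.

Lemma inH_swap (k : nat) (g : word) : inH k g -> inG k (map swap_xy g).
Proof.
case=> comm_g psi_g; split.
  exact: (in_comm_map (can_inj swap_xyK) swap_xy_inv comm_g).
by move=> m /psi_g; rewrite psi_swap.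
Qed.

Theorem lemma3p4 (k : nat) (hk : (0 < k)%N) :
  (forall g : word, inG k.-1 g -> prod_two_squares g -> is_even_rat (phi k g)) /\
  (forall g : word, inH k.-1 g -> prod_two_squares g -> is_even_rat (psi k g)).
Proof.
have below_k m : (0 < m < k)%N -> (0 < m <= k.-1)%N.
  by case/andP=> m_gt0 ltmk; rewrite m_gt0 -ltnS prednK.
have phi_even g : inG k.-1 g -> prod_two_squares g -> is_even_rat (phi k g).
  by case=> comm_g phi_g two_sq; apply: phi_two_squares_even => // m /below_k /phi_g.
split=> [//|g /inH_swap G_g two_sq].
rewrite psi_swap; apply: phi_even => //.
exact: (prod_two_squares_map (can_inj swap_xyK) swap_xy_inv two_sq).
Qed.
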